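(* Let $N\ge1$, $0<\lambda\le\Lambda$, assume $\beta=\frac{\Lambda}{\lambda}(N-1)+1>2$, and let $q>\frac{\beta}{\beta-2}$ and $\gamma>\frac{\beta}{\beta-1}$. Let $\delta$ satisfy $\max\{\frac{2}{q-1},\frac{2-\gamma}{\gamma-1}\}<\delta<\beta-2$. Then there exists $K_\delta>0$ such that $v(x)=K_\delta(1+|x|^2)^{-\delta/2}$ is a (positive, non-constant) classical solution of $$\mathcal{M}^+_{\lambda,\Lambda}(D^2v)\ge v^q+|Dv|^\gamma\quad\text{in }\mathbb{R}^N.$$
   Context: For $M\in\mathrm{Sym}_N$ with eigenvalues $e_1,\dots,e_N$, $\mathcal{M}^+_{\lambda,\Lambda}(M)=\sup_{\lambda I_N\le A\le\Lambda I_N}(-\mathrm{Tr}(AM))=-\lambda\sum_{e_k>0}e_k-\Lambda\sum_{e_k<0}e_k$. *)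

From HB Require Import structures.
From mathcomp Require Import all_boot all_order all_algebra.
From mathcomp Require Import all_classical all_reals all_analysis.
Set Implicit Arguments. Unset Strict Implicit. Unset Printing Implicit Defensive.
Import Order.TTheory GRing.Theory Num.Theory.
Import numFieldNormedType.Exports.
Local Open Scope classical_set_scope.
Local Open Scope ring_scope.

(* Euclidean squared norm and Euclidean norm (the library norm on 'rV is the sup norm). *)
Definition eucl_sq {R : realType} {N : nat} (x : 'rV[R]_N) : R :=
  \sum_(i < N) (x ord0 i) ^+ 2.
Definition eucl {R : realType} {N : nat} (x : 'rV[R]_N) : R := Num.sqrt (eucl_sq x).

Definition qform {R : realType} {N : nat} (A : 'M[R]_N) (x : 'rV[R]_N) : R :=
  (x *m A *m x^T) ord0 ord0.

Definition ellip_set {R : realType} {N : nat} (lam Lam : R) : set 'M[R]_N :=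
  [set A | A^T = A /\ forall x : 'rV[R]_N,
      lam * eucl_sq x <= qform A x /\ qform A x <= Lam * eucl_sq x].

Definition pucci_max {R : realType} {N : nat} (lam Lam : R) (M : 'M[R]_N) : R :=
  sup [set r : R | exists2 A, ellip_set lam Lam A & r = - \tr (A *m M)].

Definition ebase {R : realType} {N : nat} (i : 'I_N) : 'rV[R]_N := delta_mx ord0 i.

Definition partial {R : realType} {N : nat} (i : 'I_N) (f : 'rV[R]_N -> R) : 'rV[R]_N -> R :=
  fun x => ('D_(ebase i) f) x.
Definition grad {R : realType} {N : nat} (f : 'rV[R]_N -> R) (x : 'rV[R]_N) : 'rV[R]_N :=
  \row_(i < N) partial i f x.
Definition hessian {R : realType} {N : nat} (f : 'rV[R]_N -> R) (x : 'rV[R]_N) : 'M[R]_N :=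
  \matrix_(i < N, j < N) partial j (partial i f) x.

Definition C2 {R : realType} {N : nat} (f : 'rV[R]_N -> R) : Prop :=
  (forall x, differentiable f x) /\
  (forall i x, differentiable (partial i f) x) /\
  (forall i j, continuous (partial j (partial i f))).

From HB Require Import structures.
From mathcomp Require Import all_boot all_order all_algebra.
From mathcomp Require Import all_classical all_reals all_analysis.
From mathcomp Require Import ring lra.
Import Order.TTheory GRing.Theory Num.Theory.
Import numFieldNormedType.Exports.
Set Implicit Arguments. Unset Strict Implicit. Unset Printing Implicit Defensive.

(* The profile v(x) = K w_p(x), with w_a(x) = (1 + |x|^2)^a and p = -delta/2,
   has gradient 2Kp w_(p-1)(x) x and Hessian
     2Kp w_(p-1)(x) I + 4Kp(p-1) w_(p-2)(x) x^T x.
   The Pucci maximal operator is bounded below by -tr(A M) for any admissible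
   A (its defining set is bounded, since admissible matrices have entries
   bounded by Lam); testing with A = Lam I - (Lam - lam) u^T u, u = x/|x|,
   and using w_(p-2) |x|^2 <= w_(p-1), gives
     M+(D^2 v) >= K lam delta (beta - 2 - delta) w_(p-1).
   The exponent conditions on delta make v^q <= K^q w_(p-1) and
   |Dv|^gam <= (K delta)^gam w_(p-1), so the inequality holds once K is small. *)
Local Open Scope ring_scope.

Lemma derive_comp_real (R : realType) (V : normedModType R) (f : V -> R)
    (g : R -> R) (x w : V) (dg : R) :
  differentiable f x -> is_derive (f x) 1 g dg ->
  differentiable (g \o f) x /\ 'D_w (g \o f) x = dg * 'D_w f x.
Proof.
move=> df [dg_derivable dgE].
have dg' : differentiable g (f x) by exact/derivable1_diffP.
have dgf : differentiable (g \o f) x by exact: differentiable_comp.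
split => //.
rewrite deriveE // diff_comp // /= (deriveE _ df) deriv1E // derive1E dgE.
by rewrite mulrC.
Qed.

Lemma is_derive_powR_shift (R : realType) (a t : R) : 0 <= t ->
  is_derive t 1 (fun s : R => powR (1 + s) a) (a * powR (1 + t) (a - 1)).
Proof.
move=> t0.
have d1 : differentiable (fun s : R => 1 + s) t.
  by apply: differentiableD => //; apply: differentiable_cst.
have D1 : 'D_1 (fun s : R => 1 + s) t = 1.
  by rewrite deriveD ?derive_cst ?derive_id ?add0r.
have t1 : 0 < 1 + t by rewrite ltr_pwDl.
have [dc Dc] := @derive_comp_real R _ (fun s : R => 1 + s) (fun s => powR s a)
  t 1 _ d1 (is_derive1_powR a t1).
apply: DeriveDef; first exact: diff_derivable.
by rewrite Dc D1 mulr1.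
Qed.

Section Euclidean.
Variables (R : realType) (N : nat).
Local Notation V := 'rV[R]_N.

Definition dot (y z : V) : R := (y *m z^T) ord0 ord0.

Lemma dotE (y z : V) : dot y z = \sum_(i < N) y ord0 i * z ord0 i.
Proof. by rewrite /dot mxE; apply: eq_bigr => i _; rewrite mxE. Qed.

Lemma dotC (y z : V) : dot y z = dot z y.
Proof. by rewrite !dotE; apply: eq_bigr => i _; rewrite mulrC. Qed.

Lemma dotZr (k : R) (y z : V) : dot y (k *: z) = k * dot y z.
Proof. by rewrite !dotE mulr_sumr; apply: eq_bigr => i _; rewrite !mxE; ring. Qed.

Lemma eucl_sq_dot (y : V) : eucl_sq y = dot y y.
Proof. by rewrite dotE; apply: eq_bigr => i _; rewrite expr2. Qed.

Lemma eucl_sq_ge0 (y : V) : 0 <= eucl_sq y.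
Proof. by apply: sumr_ge0 => i _; apply: sqr_ge0. Qed.

Lemma eucl_sqZ (k : R) (y : V) : eucl_sq (k *: y) = k ^+ 2 * eucl_sq y.
Proof. by rewrite /eucl_sq mulr_sumr; apply: eq_bigr => i _; rewrite !mxE; ring. Qed.

Lemma eucl_sq0 : eucl_sq (0 : V) = 0.
Proof. by rewrite /eucl_sq big1 // => i _; rewrite mxE expr0n. Qed.

Lemma ebaseE (j i : 'I_N) : (ebase j : V) ord0 i = (i == j)%:R.
Proof. by rewrite /ebase mxE eqxx /= eq_sym. Qed.

Lemma eucl_sq_ebase (i : 'I_N) : eucl_sq (ebase i : V) = 1.
Proof.
rewrite /eucl_sq (bigD1 i) //= big1 ?addr0; first by rewrite ebaseE eqxx expr1n.
by move=> j /negPf ji; rewrite ebaseE ji expr0n.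
Qed.

Lemma eucl_sq_subZ (t : R) (y u : V) :
  eucl_sq (y - t *: u) = eucl_sq y - 2 * t * dot y u + t ^+ 2 * eucl_sq u.
Proof.
rewrite dotE /eucl_sq !mulr_sumr -sumrB -big_split /=.
by apply: eq_bigr => i _; rewrite !mxE; ring.
Qed.

(* Cauchy-Schwarz against a unit vector, from 0 <= |y - (y.u) u|^2. *)
Lemma cauchy_schwarz_unit (y u : V) : eucl_sq u = 1 -> dot y u ^+ 2 <= eucl_sq y.
Proof.
move=> u1; have := eucl_sq_ge0 (y - dot y u *: u).
by rewrite eucl_sq_subZ u1; lra.
Qed.

Lemma unit_direction (x : V) (i0 : 'I_N) :
  exists u : V, eucl_sq u = 1 /\ dot x u ^+ 2 = eucl_sq x.
Proof.
have [x0|xn0] := eqVneq (eucl_sq x) 0.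
  exists (ebase i0); split; first exact: eucl_sq_ebase.
  apply/eqP; rewrite eq_le x0 sqr_ge0 andbT -x0.
  exact/cauchy_schwarz_unit/eucl_sq_ebase.
have xp : 0 < eucl_sq x by rewrite lt0r xn0 eucl_sq_ge0.
exists ((Num.sqrt (eucl_sq x))^-1 *: x); split.
  by rewrite eucl_sqZ exprVn sqr_sqrtr ?eucl_sq_ge0 // mulVf.
rewrite dotZr -eucl_sq_dot exprMn exprVn sqr_sqrtr ?eucl_sq_ge0 //.
by rewrite expr2 mulrA mulVf // mul1r.
Qed.

End Euclidean.

Section Pucci.
Variables (R : realType) (N : nat).
Local Notation V := 'rV[R]_N.

Lemma bilin_ebase (A : 'M[R]_N) (i j : 'I_N) :
  (ebase i *m A *m (ebase j)^T) ord0 ord0 = A i j.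
Proof.
rewrite /ebase -rowE trmx_delta mxE (bigD1 j) //= big1 ?addr0.
  by rewrite !mxE !eqxx mulr1.
by move=> k /negPf kj; rewrite !mxE kj /= mulr0.
Qed.

Lemma qformD (A : 'M[R]_N) (y z : V) : A^T = A ->
  qform A (y + z) = qform A y + qform A z + 2 * (y *m A *m z^T) ord0 ord0.
Proof.
move=> sA; have zy : (z *m A *m y^T) ord0 ord0 = (y *m A *m z^T) ord0 ord0.
  transitivity ((z *m A *m y^T)^T ord0 ord0); first by rewrite [in RHS]mxE.
  by rewrite !trmx_mul trmxK sA mulmxA.
rewrite /qform linearD /= !mulmxDl !mulmxDr; move: zy.
move: (y *m A *m y^T) (z *m A *m z^T) (y *m A *m z^T) (z *m A *m y^T) => a b c d.
by rewrite !mxE => ->; ring.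
Qed.

(* Entries of an admissible matrix are bounded by Lam: test the quadratic
   form on e_i + e_j and e_i - e_j. *)
Lemma ellip_entry_bound (lam Lam : R) (A : 'M[R]_N) :
  0 <= lam -> ellip_set lam Lam A -> forall i j, `|A i j| <= Lam.
Proof.
move=> l0 [sA hA] i j.
have qform_ge0 y : 0 <= qform A y.
  by have [h _] := hA y; apply: le_trans h; rewrite mulr_ge0 ?eucl_sq_ge0.
have qform_ebase k : qform A (ebase k) = A k k by rewrite /qform bilin_ebase.
have diag_le k : A k k <= Lam.
  by have [_ h] := hA (ebase k); rewrite qform_ebase eucl_sq_ebase mulr1 in h.
have qformN y : qform A (- y) = qform A y.
  by rewrite /qform linearN /= !(mulNmx, mulmxN) opprK.
have bilinN : (ebase i *m A *m (- ebase j)^T) ord0 ord0 = - A i j.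
  by rewrite linearN /= mulmxN [LHS]mxE bilin_ebase.
have := qform_ge0 (ebase i + ebase j); rewrite qformD // bilin_ebase !qform_ebase.
have := qform_ge0 (ebase i - ebase j); rewrite qformD // bilinN qformN !qform_ebase.
have := diag_le i; have := diag_le j.
by rewrite ler_norml => *; apply/andP; split; lra.
Qed.

(* Every admissible matrix A gives a lower bound -tr(AM) for the Pucci
   maximal operator; the defining set is bounded above thanks to the entry
   bound, so its supremum is an upper bound. *)
Lemma pucci_max_ge (lam Lam : R) (A M : 'M[R]_N) :
  0 <= lam -> ellip_set lam Lam A -> - \tr (A *m M) <= pucci_max lam Lam M.
Proof.
move=> l0 hA; apply: sup_upper_bound; last by exists A.
split; first by exists (- \tr (A *m M)), A.
exists (\sum_(i < N) \sum_(j < N) Lam * `|M j i|) => _ [B hB ->].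
have trE : \tr (B *m M) = \sum_(i < N) \sum_(j < N) B i j * M j i.
  by apply: eq_bigr => i _; rewrite mxE.
rewrite trE; apply: le_trans (ler_norm _) _; rewrite normrN.
apply: le_trans (ler_norm_sum _ _ _) _; apply: ler_sum => i _.
apply: le_trans (ler_norm_sum _ _ _) _; apply: ler_sum => j _.
by rewrite normrM ler_wpM2r // (ellip_entry_bound l0 hB).
Qed.

Lemma trace_scalar_rank_one (A : 'M[R]_N) (a b : R) (x : V) :
  \tr (A *m (a%:M + b *: (x^T *m x))) = a * \tr A + b * qform A x.
Proof.
rewrite mulmxDr mul_mx_scalar mxtraceD mxtraceZ -scalemxAr mxtraceZ.
by rewrite mulmxA mxtrace_mulC mulmxA /qform /mxtrace big_ord1.
Qed.

Definition test_matrix (lam Lam : R) (u : V) : 'M[R]_N :=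
  Lam%:M - (Lam - lam) *: (u^T *m u).

Lemma qform_test_matrix (lam Lam : R) (u y : V) :
  qform (test_matrix lam Lam u) y = Lam * eucl_sq y - (Lam - lam) * dot y u ^+ 2.
Proof.
rewrite /qform /test_matrix mulmxBr mul_mx_scalar -scalemxAr mulmxBl -!scalemxAl.
rewrite mulmxA -(mulmxA _ u) eucl_sq_dot; have := dotC u y; rewrite /dot.
move: (y *m y^T) (y *m u^T) (u *m y^T) => yy yu uy uyE.
by rewrite !mxE big_ord1 uyE expr2.
Qed.

Lemma test_matrix_ellip (lam Lam : R) (u : V) : 0 <= lam -> lam <= Lam ->
  eucl_sq u = 1 -> ellip_set lam Lam (test_matrix lam Lam u).
Proof.
move=> l0 lL u1; split.
  by rewrite /test_matrix linearB /= tr_scalar_mx linearZ /= trmx_mul trmxK.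
move=> y; rewrite qform_test_matrix.
have := cauchy_schwarz_unit y u1; have := sqr_ge0 (dot y u).
by move=> *; split; nra.
Qed.

Lemma trace_test_matrix (lam Lam : R) (u : V) : eucl_sq u = 1 ->
  \tr (test_matrix lam Lam u) = Lam * N%:R - (Lam - lam).
Proof.
move=> u1; rewrite /test_matrix linearB /= mxtrace_scalar mxtraceZ mxtrace_mulC.
by rewrite /mxtrace big_ord1 -/(dot u u) -eucl_sq_dot u1 mulr1 mulr_natr.
Qed.

(* Lower bound for the Pucci operator on a I + b x^T x, obtained from the
   test matrix aligned with x. *)
Lemma pucci_max_scalar_rank_one (lam Lam a b : R) (x : V) (i0 : 'I_N) :
  0 <= lam -> lam <= Lam ->
  - (a * (Lam * N%:R - (Lam - lam)) + b * (lam * eucl_sq x))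
    <= pucci_max lam Lam (a%:M + b *: (x^T *m x)).
Proof.
move=> l0 lL; have [u [u1 xu]] := unit_direction x i0.
apply: le_trans (pucci_max_ge _ l0 (test_matrix_ellip l0 lL u1)).
rewrite trace_scalar_rank_one trace_test_matrix // qform_test_matrix xu.
by rewrite lerN2 le_eqVlt; apply/orP; left; apply/eqP; ring.
Qed.

End Pucci.

Section Weight.
Variables (R : realType) (N : nat).
Local Notation V := 'rV[R]_N.

Definition coord (i : 'I_N) : V -> R := fun x => x ord0 i.

(* A coordinate is a continuous linear form, hence its own derivative. *)
Lemma derive_coord (i : 'I_N) (x w : V) : 'D_w (coord i) x = w ord0 i.
Proof.
have @f : {linear V -> R}.
  by exists (fun y : V => y ord0 i); do 2![eexists]; do ?[constructor];
     rewrite ?mxE// => ? *; rewrite ?mxE//; move=> ?; rewrite !mxE.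
rewrite (_ : coord i = f) //.
rewrite deriveE; last exact/linear_differentiable/coord_continuous.
by rewrite diff_lin //; exact: coord_continuous.
Qed.

Lemma eucl_sq_sum_coord : (eucl_sq : V -> R) = \sum_(i < N) (coord i * coord i).
Proof.
rewrite fct_sumE; apply/funext => y; rewrite /eucl_sq.
by apply: eq_bigr => i _; rewrite expr2.
Qed.

Lemma differentiable_eucl_sq (x : V) : differentiable (eucl_sq : V -> R) x.
Proof.
rewrite eucl_sq_sum_coord; apply: differentiable_sum => i.
by apply: differentiableM; exact: differentiable_coord.
Qed.

Lemma derive_eucl_sq (x w : V) : 'D_w (eucl_sq : V -> R) x = 2 * dot x w.
Proof.
have dc i : differentiable (coord i) x by exact: differentiable_coord.
rewrite eucl_sq_sum_coord derive_sum; last first.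
  by move=> i; exact/diff_derivable/differentiableM.
rewrite dotE mulr_sumr; apply: eq_bigr => i _.
rewrite deriveM ?derive_coord; try exact: diff_derivable.
by rewrite -[_ *: _]/(x ord0 i * w ord0 i); ring.
Qed.

Lemma dot_ebase (x : V) (j : 'I_N) : dot x (ebase j) = x ord0 j.
Proof.
rewrite dotE (bigD1 j) //= big1 ?addr0; first by rewrite ebaseE eqxx mulr1.
by move=> i /negPf ij; rewrite ebaseE ij mulr0.
Qed.

Definition weight (a : R) : V -> R := fun x => powR (1 + eucl_sq x) a.

Lemma weight_derive (a : R) (x w : V) : differentiable (weight a) x /\
  'D_w (weight a) x = a * weight (a - 1) x * (2 * dot x w).
Proof.
rewrite -derive_eucl_sq.
apply: (@derive_comp_real R _ eucl_sq (fun s => powR (1 + s) a)).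
  exact: differentiable_eucl_sq.
exact/is_derive_powR_shift/eucl_sq_ge0.
Qed.

Lemma differentiable_weight (a : R) (x : V) : differentiable (weight a) x.
Proof. by have [] := weight_derive a x 0. Qed.

Lemma partial_weight (a : R) (x : V) (j : 'I_N) :
  'D_(ebase j) (weight a) x = a * weight (a - 1) x * (2 * x ord0 j).
Proof. by have [_ ->] := weight_derive a x (ebase j); rewrite dot_ebase. Qed.

Lemma weightD (a b : R) (x : V) : weight (a + b) x = weight a x * weight b x.
Proof.
have s0 : 0 < 1 + eucl_sq x by rewrite ltr_pwDl ?eucl_sq_ge0.
by rewrite /weight powRD // (gt_eqF s0) implybT.
Qed.

(* Since 1 + |x|^2 >= |x|^2, lowering the exponent by one costs a factor |x|^2. *)
Lemma weight_pred_le (a : R) (x : V) : weight (a - 1) x * eucl_sq x <= weight a x.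
Proof.
rewrite -{2}(subrK 1 a) (weightD (a - 1) 1) ler_wpM2l ?powR_ge0 //.
by rewrite /weight powRr1 ?lerDr // addr_ge0 ?eucl_sq_ge0.
Qed.

Lemma eucl_le_weight_half (x : V) : eucl x <= weight 2^-1 x.
Proof.
by rewrite /eucl /weight powR12_sqrt ?ler_sqrt ?lerDr // addr_ge0 ?eucl_sq_ge0.
Qed.

End Weight.

Section Profile.
Variables (R : realType) (N : nat).
Local Notation V := 'rV[R]_N.

Definition profile (K p : R) : V -> R := fun x => K * weight p x.

Lemma differentiable_profile (K p : R) (x : V) : differentiable (profile K p) x.
Proof.
rewrite (_ : profile K p = K *: weight p) //.
exact/differentiableZ/differentiable_weight.
Qed.

Lemma partial_profile (K p : R) (i : 'I_N) : partial i (profile K p) =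
  fun y => 2 * K * p * (weight (p - 1) y * coord i y).
Proof.
apply/funext => x; rewrite /partial (_ : profile K p = K *: weight p) //.
rewrite deriveZ; last exact/diff_derivable/differentiable_weight.
by rewrite partial_weight /coord -[_ *: _]/(_ * _); ring.
Qed.

Lemma partial_weight_coord (c a : R) (i j : 'I_N) (x : V) :
  let f := fun y => c * (weight a y * coord i y) in
  differentiable f x /\ 'D_(ebase j) f x =
    c * (weight a x * (i == j)%:R + x ord0 i * (a * weight (a - 1) x * (2 * x ord0 j))).
Proof.
move=> f; have dwc : differentiable (weight a * coord i) x.
  by apply: differentiableM; [exact: differentiable_weight | exact: differentiable_coord].
rewrite (_ : f = c *: (weight a * coord i)) //; split; first exact: differentiableZ.
rewrite deriveZ; last exact: diff_derivable.
rewrite deriveM; last 2 first.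
- exact/diff_derivable/differentiable_weight.
- exact/diff_derivable/differentiable_coord.
by rewrite partial_weight derive_coord ebaseE.
Qed.

Lemma second_partial_profile (K p : R) (i j : 'I_N) (x : V) :
  partial j (partial i (profile K p)) x = 2 * K * p *
    (weight (p - 1) x * (i == j)%:R + x ord0 i * ((p - 1) * weight (p - 2) x * (2 * x ord0 j))).
Proof.
rewrite partial_profile /partial; have [_ ->] := partial_weight_coord (2 * K * p) (p - 1) i j x.
by rewrite (_ : p - 1 - 1 = p - 2) //; ring.
Qed.

Lemma hessian_profile (K p : R) (x : V) : hessian (profile K p) x =
  (2 * K * p * weight (p - 1) x)%:M + (4 * K * p * (p - 1) * weight (p - 2) x) *: (x^T *m x).
Proof.
apply/matrixP => i j; rewrite !mxE second_partial_profile big_ord1 !mxE.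
by case: (i == j) => /=; rewrite ?mulr1n ?mulr0n; ring.
Qed.

Lemma grad_profile (K p : R) (x : V) :
  grad (profile K p) x = (2 * K * p * weight (p - 1) x) *: x.
Proof.
apply/matrixP => i j; rewrite !mxE -/(partial j (profile K p) x) partial_profile.
by rewrite /coord (ord1 i); ring.
Qed.

Lemma C2_profile (K p : R) : C2 (profile K p).
Proof.
split; first exact: differentiable_profile.
split=> [i x|i j x].
  by rewrite partial_profile; have [] := partial_weight_coord (2 * K * p) (p - 1) i i x.
apply: differentiable_continuous.
rewrite (_ : partial j _ = fun y => 2 * K * p * (weight (p - 1) y * (i == j)%:R
    + coord i y * ((p - 1) * weight (p - 2) y * (2 * coord j y)))); last first.
  by apply/funext => y; rewrite second_partial_profile.
have dw a : differentiable (weight a) x by exact: differentiable_weight.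
have dc k : differentiable (coord k) x by exact: differentiable_coord.
by apply: differentiableM => //; apply: differentiableD;
  repeat apply: differentiableM.
Qed.

Lemma profile_gt0 (K p : R) (x : V) : 0 < K -> 0 < profile K p x.
Proof. by move=> K0; rewrite mulr_gt0 // powR_gt0 // ltr_pwDl ?eucl_sq_ge0. Qed.

Lemma profile_nonconstant (K p : R) (i0 : 'I_N) : K != 0 -> p != 0 ->
  profile K p 0 <> profile K p (ebase i0).
Proof.
move=> Kn0 pn0; rewrite /profile /weight eucl_sq0 eucl_sq_ebase addr0 powR1.
move=> /(mulfI Kn0) /esym /eqP; rewrite powR_eq1 (negPf pn0) orbF.
by rewrite -subr_eq0 addrK oner_eq0 ltNge addr_ge0.
Qed.

End Profile.

Section Estimates.
Variables (R : realType) (N : nat).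
Local Notation V := 'rV[R]_N.

(* For the decay rate delta, the Pucci operator of the Hessian of
   K (1 + |x|^2)^(-delta/2) dominates a fixed multiple of (1 + |x|^2)^(-delta/2-1);
   the rank-one part only helps because its coefficient is positive. *)
Lemma pucci_hessian_profile (lam Lam K delta : R) (x : V) (i0 : 'I_N) :
  0 < lam -> lam <= Lam -> 0 < K -> 0 < delta ->
  K * delta * (Lam * N%:R - (Lam - lam) - lam * (delta + 2)) * weight (- (delta / 2) - 1) x
    <= pucci_max lam Lam (hessian (profile K (- (delta / 2))) x).
Proof.
move=> l0 lL K0 d0; set p := - (delta / 2).
rewrite hessian_profile; apply: le_trans (pucci_max_scalar_rank_one _ _ _ i0 (ltW l0) lL).
have TS : weight (p - 2) x * eucl_sq x <= weight (p - 1) x.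
  by rewrite (_ : p - 2 = p - 1 - 1) ?weight_pred_le //; ring.
move: TS; set S := weight (p - 1) x; set T := weight (p - 2) x => TS.
rewrite -subr_ge0.
have -> : - (2 * K * p * S * (Lam * N%:R - (Lam - lam)) +
    4 * K * p * (p - 1) * T * (lam * eucl_sq x)) -
    K * delta * (Lam * N%:R - (Lam - lam) - lam * (delta + 2)) * S =
    K * delta * lam * (delta + 2) * (S - T * eucl_sq x) by rewrite /p; field.
apply: mulr_ge0; last by rewrite subr_ge0.
by rewrite !mulr_ge0 ?addr_ge0 // ltW.
Qed.

Lemma profile_pow_le (K p q : R) (x : V) : 0 < K -> p * q <= p - 1 ->
  powR (profile K p x) q <= powR K q * weight (p - 1) x.
Proof.
move=> K0 pq; rewrite /profile powRM ?(ltW K0) ?powR_ge0 //.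
by rewrite /weight -powRrM ler_wpM2l ?powR_ge0 // ler_powR // lerDl eucl_sq_ge0.
Qed.

(* |Dv|^gam <= (K delta)^gam (1 + |x|^2)^(p-1) for p = -delta/2, as soon as
   (p - 1/2) gam <= p - 1, using |Dv| = K delta |x| (1 + |x|^2)^(p-1). *)
Lemma profile_grad_pow_le (K delta gam : R) (x : V) :
  0 < K -> 0 < delta -> 0 <= gam ->
  (- (delta / 2) - 2^-1) * gam <= - (delta / 2) - 1 ->
  powR (eucl (grad (profile K (- (delta / 2))) x)) gam
    <= powR (K * delta) gam * weight (- (delta / 2) - 1) x.
Proof.
move=> K0 d0 g0 pg; set p := - (delta / 2) in pg *.
have Kd0 : 0 <= K * delta by rewrite mulr_ge0 ?ltW.
have gradE : eucl (grad (profile K p) x) = K * delta * weight (p - 1) x * eucl x.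
  rewrite grad_profile /eucl eucl_sqZ sqrtrM ?sqr_ge0 // sqrtr_sqr.
  rewrite (_ : 2 * K * p * weight (p - 1) x = - (K * delta * weight (p - 1) x)).
    by rewrite normrN ger0_norm // mulr_ge0 ?powR_ge0.
  by rewrite /p; field.
have gradW : eucl (grad (profile K p) x) <= K * delta * weight (p - 2^-1) x.
  rewrite gradE -mulrA ler_wpM2l // (_ : p - 2^-1 = p - 1 + 2^-1); last by field.
  by rewrite (weightD (p - 1)) ler_wpM2l ?powR_ge0 ?eucl_le_weight_half.
apply: le_trans (ge0_ler_powR g0 _ _ gradW) _; rewrite ?nnegrE ?sqrtr_ge0 //.
  by rewrite mulr_ge0 ?powR_ge0.
rewrite powRM ?powR_ge0 // ler_wpM2l ?powR_ge0 //.
by rewrite /weight -powRrM ler_powR // lerDl eucl_sq_ge0.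
Qed.

Lemma profile_supersolution (lam Lam K q gam delta : R) (i0 : 'I_N) :
  0 < lam -> lam <= Lam -> 0 < K -> 0 < delta -> 0 <= gam ->
  2 <= delta * (q - 1) -> 2 - gam <= delta * (gam - 1) ->
  powR K (q - 1) + powR delta gam * powR K (gam - 1)
    <= delta * (Lam * N%:R - (Lam - lam) - lam * (delta + 2)) ->
  forall x : V, powR (profile K (- (delta / 2)) x) q
      + powR (eucl (grad (profile K (- (delta / 2))) x)) gam
    <= pucci_max lam Lam (hessian (profile K (- (delta / 2))) x).
Proof.
move=> l0 lL K0 d0 g0 hq hg hK x.
apply: le_trans (pucci_hessian_profile x i0 l0 lL K0 d0).
have powK r : powR K r = K * powR K (r - 1).
  rewrite -{1}(subrK 1 r) (@powRD _ K (r - 1) 1); last by rewrite (gt_eqF K0) implybT.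
  by rewrite powRr1 ?(ltW K0) // mulrC.
have hv := @profile_pow_le K (- (delta / 2)) q x K0 ltac:(lra).
have hDv := profile_grad_pow_le x K0 d0 g0 ltac:(lra).
rewrite powRM ?(ltW K0) ?(ltW d0) // in hDv.
rewrite powK [powR K gam]powK in hv hDv.
apply: le_trans (lerD hv hDv) _.
move: hK; set c := _ * (_ - _ - _); set S := weight _ x => hK.
have KS0 : 0 <= K * S by rewrite mulr_ge0 ?powR_ge0 ?ltW.
apply: le_trans (_ : _ <= K * S * (powR K (q - 1) + powR delta gam * powR K (gam - 1))) _.
  by rewrite le_eqVlt; apply/orP; left; apply/eqP; ring.
by rewrite (_ : K * delta * _ * S = K * S * c) ?ler_wpM2l // /c; ring.
Qed.

End Estimates.

Lemma powR_le_of_le_root (R : realType) (r c K : R) : 0 < r -> 0 < c -> 0 <= K ->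
  K <= powR c r^-1 -> powR K r <= c.
Proof.
move=> r0 c0 K0 hK.
apply: le_trans (ge0_ler_powR (ltW r0) _ _ hK) _; rewrite ?nnegrE ?powR_ge0 //.
by rewrite -powRrM mulVf ?gt_eqF // powRr1 // ltW.
Qed.

Lemma exists_small_amplitude (R : realType) (c d r s : R) :
  0 < c -> 0 < d -> 0 < r -> 0 < s ->
  exists K : R, 0 < K /\ powR K r + d * powR K s <= c.
Proof.
move=> c0 d0 r0 s0.
have c2 : 0 < c / 2 by rewrite divr_gt0.
have cd : 0 < c / (2 * d) by rewrite divr_gt0 ?mulr_gt0.
set K1 := powR (c / 2) r^-1; set K2 := powR (c / (2 * d)) s^-1.
have K0 : 0 < Num.min K1 K2 by rewrite lt_min !powR_gt0.
exists (Num.min K1 K2); split=> //.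
have h1 : powR (Num.min K1 K2) r <= c / 2.
  by apply: powR_le_of_le_root => //; [exact: ltW | rewrite ge_min lexx].
have h2 : powR (Num.min K1 K2) s <= c / (2 * d).
  by apply: powR_le_of_le_root => //; [exact: ltW | rewrite ge_min lexx orbT].
have h2d : d * powR (Num.min K1 K2) s <= c / 2.
  rewrite (_ : c / 2 = d * (c / (2 * d))); first by rewrite ler_wpM2l // ltW.
  by field; rewrite gt_eqF.
lra.
Qed.

Theorem mainTheorem5 (R : realType) (N : nat) (lam Lam q gam delta : R) :
  (1 <= N)%N -> 0 < lam -> lam <= Lam ->
  let beta := Lam / lam * (N%:R - 1) + 1 in
  2 < beta ->
  beta / (beta - 2) < q ->
  beta / (beta - 1) < gam ->
  Num.max (2 / (q - 1)) ((2 - gam) / (gam - 1)) < delta ->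
  delta < beta - 2 ->
  exists K : R, 0 < K /\
    let v := fun x : 'rV[R]_N => K * powR (1 + eucl_sq x) (- (delta / 2)) in
    C2 v /\
    (forall x, 0 < v x) /\ (exists x y, v x <> v y) /\
    (forall x, powR (v x) q + powR (eucl (grad v x)) gam
               <= pucci_max lam Lam (hessian v x)).
Proof.
move=> hN l0 lL beta hb hq hg; rewrite gt_max => /andP[hdq hdg] hdb.
have q1 : 1 < q by apply: lt_trans hq; rewrite ltr_pdivlMr ?subr_gt0 //; lra.
have g1 : 1 < gam by apply: lt_trans hg; rewrite ltr_pdivlMr ?subr_gt0 //; lra.
have d0 : 0 < delta by apply: lt_trans hdq; rewrite divr_gt0 ?subr_gt0.
move: hdq hdg; rewrite !ltr_pdivrMr ?subr_gt0 // => hdq hdg.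
have c0 : 0 < delta * (Lam * N%:R - (Lam - lam) - lam * (delta + 2)).
  rewrite (_ : _ * _ = lam * delta * (beta - 2 - delta)); last first.
    by rewrite /beta; field; rewrite gt_eqF.
  by rewrite !mulr_gt0 ?subr_gt0.
have q0 : 0 < q - 1 by rewrite subr_gt0.
have g0 : 0 < gam - 1 by rewrite subr_gt0.
have [K [K0 hK]] := exists_small_amplitude c0 (powR_gt0 gam d0) q0 g0.
exists K; split=> // v; have -> : v = profile K (- (delta / 2)) by [].
have i0 : 'I_N := Ordinal hN.
split; first exact: C2_profile.
split; first by move=> x; exact: profile_gt0.
split.
  exists 0, (ebase i0); apply: profile_nonconstant; first by rewrite gt_eqF.
  by rewrite oppr_eq0 mulf_neq0 ?invr_eq0 ?gt_eqF.
apply: profile_supersolution => //; rewrite ?ltW //; lra.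
Qed.
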